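(* Let $P=[0,1]$. For the online cumulative distance (CD) problem in $P$, no (possibly randomized) online algorithm achieves a competitive ratio to $OPT_C$ better than $\Omega(n)$, where $n$ is the number of points.
   Context: Distances are Euclidean; $\partial P=\{0,1\}$. An instance is $S=((s_1,d_1),\dots,(s_n,d_n))$ with $s_i<d_i$, $0=s_1\le\dots\le s_n$; point $i$ is present at time $t$ iff $s_i\le t\le d_i$; $T=\max_i d_i$. For locations $X\in P^n$, $d_{min}(t;X)=\min\{dis(X_i,\partial P),dis(X_i,X_j)\}$ over present points $i\ne j$ at time $t$, and $OPT_C(S;P)=\max_X\int_0^T d_{min}(t;X)\,dt$. In the online problem, upon arrival of each point the algorithm irrevocably chooses its location without knowing future events or $n$; the events are chosen by an adaptive adversary knowing the algorithm. The competitive ratio on $S$ is $OPT_C(S;P)/\int_0^T d_{min}(t;X)\,dt$ for the algorithm's output $X$. *)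

From Stdlib Require Import Reals Lra Lia List.
From Coquelicot Require Import Coquelicot.
Import ListNotations.
Open Scope R_scope.

(* An instance is the list ((s_1,d_1),...,(s_n,d_n)); indices are 0-based. *)
Definition instance := list (R * R).

Definition arr (S : instance) (i : nat) : R := fst (nth i S (0, 0)).
Definition dep (S : instance) (i : nat) : R := snd (nth i S (0, 0)).

Definition valid_instance (S : instance) : Prop :=
  (forall i, (i < length S)%nat -> arr S i < dep S i) /\
  (S <> nil -> arr S 0 = 0) /\
  (forall i j, (i <= j)%nat -> (j < length S)%nat -> arr S i <= arr S j).

Definition presentb (S : instance) (t : R) (i : nat) : bool :=
  if Rle_dec (arr S i) t then (if Rle_dec t (dep S i) then true else false)
  else false.

Definition dis_bd (x : R) : R := Rmin (Rabs (x - 0)) (Rabs (x - 1)).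

Definition dvals (S : instance) (X : nat -> R) (t : R) : list R :=
  let n := length S in
  flat_map (fun i =>
     if presentb S t i then
       dis_bd (X i) ::
       flat_map (fun j =>
          if andb (presentb S t j) (negb (Nat.eqb i j)) then [Rabs (X i - X j)] else [])
         (seq 0 n)
     else []) (seq 0 n).

(* d_min(t;X); convention: 0 when no point is present *)
Definition dmin (S : instance) (X : nat -> R) (t : R) : R :=
  match dvals S X t with
  | [] => 0
  | v :: l => fold_right Rmin v l
  end.

Definition horizon (S : instance) : R := fold_right Rmax 0 (map snd S).

Definition cumdist (S : instance) (X : nat -> R) : R :=
  RInt (dmin S X) 0 (horizon S).

Definition OPT_C (S : instance) : Rbar :=
  Lub_Rbar (fun v => exists X : nat -> R,
              (forall i, (i < length S)%nat -> 0 <= X i <= 1) /\ v = cumdist S X).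

(* Information available to an online algorithm when point i arrives:
   arrival times s_1..s_i, and the departure times of earlier points that
   have already departed (d_j <= s_i).  Neither n nor future events. *)
Definition view (S : instance) (i : nat) : list (R * option R) :=
  map (fun j => (arr S j,
                 if Nat.ltb j i then
                   (if Rle_dec (dep S j) (arr S i) then Some (dep S j) else None)
                 else None))
      (seq 0 (Datatypes.S i)).

Definition online_alg (alg : instance -> nat -> R) : Prop :=
  (forall S i, valid_instance S -> (i < length S)%nat -> 0 <= alg S i <= 1) /\
  (forall S S' i, valid_instance S -> valid_instance S' ->
     (i < length S)%nat -> (i < length S')%nat ->
     view S i = view S' i -> alg S i = alg S' i).

Definition locs (alg : instance -> nat -> R) (S : instance) (k : nat) : list R :=
  map (alg S) (seq 0 k).

(* Adaptive (online) adversary: a strategy adv mapping the locations observed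
   so far to an instance.  S is the instance generated by the interaction of
   adv with alg if S is valid, is the adversary's final answer to all the
   locations, and everything revealed up to arrival i (the view at i, in
   particular the existence of an i-th point) was already fixed by adv after
   seeing only the first i locations. *)
Definition generated (adv : list R -> instance) (alg : instance -> nat -> R)
    (S : instance) : Prop :=
  valid_instance S /\
  S = adv (locs alg S (length S)) /\
  (forall i, (i < length S)%nat ->
     (i < length (adv (locs alg S i)))%nat /\
     view (adv (locs alg S i)) i = view S i).

From Stdlib Require Import Reals Lra Lia List ZArith Classical ClassicalEpsilon.
From Coquelicot Require Import Coquelicot.
Open Scope R_scope.

(* All n points arrive at time 0 and nothing departs before the last arrival,
   so every online algorithm sees the same history and commits to one fixed
   configuration in [0,1].  By pigeonhole two of its points, a and b, are
   within 1/(n-1) of each other.  The adversary then lets every other point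
   leave at time 1 and keeps a and b until time 2: the algorithm collects at
   most 2/(n-1), whereas the offline placement of a and b at 1/3 and 2/3
   collects at least 1/3.  A randomized algorithm is a family of deterministic
   ones indexed by its seed, and the adversary answers each of them this way. *)

Lemma pigeonhole_nat (m : nat) (f : nat -> nat) :
  (forall i, (i <= m)%nat -> (f i < m)%nat) ->
  exists i j, (i < j <= m)%nat /\ f i = f j.
Proof.
  intro Hf.
  destruct (classic (exists i j, (i < j <= m)%nat /\ f i = f j)) as [|Hno]; [assumption|].
  exfalso.
  assert (Hnodup : NoDup (map f (seq 0 (S m)))).
  { apply (NoDup_nth _ (f 0%nat)). rewrite length_map, length_seq.
    intros i j Hi Hj Heq. rewrite !map_nth, !seq_nth in Heq by assumption.
    destruct (Nat.lt_total i j) as [Hij|[Hij|Hij]]; [| assumption |];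
      exfalso; apply Hno; [exists i, j | exists j, i]; split; auto; lia. }
  assert (Hlen : (length (map f (seq 0 (S m))) <= length (seq 0 m))%nat).
  { apply (NoDup_incl_length Hnodup). intros y Hy. apply in_map_iff in Hy as [i [<- Hi]].
    apply in_seq in Hi. apply in_seq. specialize (Hf i). lia. }
  rewrite length_map, !length_seq in Hlen. lia.
Qed.

(* [x] in [0,1] falls into bucket [k] when [k <= m x <= k + 1]; the top
   point [x = 1] is clamped into the last bucket [m - 1]. *)
Definition bucket (m : nat) (x : R) : nat :=
  Nat.min (Z.to_nat (Int_part (x * INR m))) (m - 1).

Lemma bucket_spec (m : nat) (x : R) : (1 <= m)%nat -> 0 <= x <= 1 ->
  (bucket m x < m)%nat /\ INR (bucket m x) <= x * INR m <= INR (bucket m x) + 1.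
Proof.
  intros Hm Hx.
  destruct (base_Int_part (x * INR m)) as [Hfloor Hceil].
  set (z := Int_part (x * INR m)) in *.
  assert (Hm1 : 1 <= INR m) by (apply (le_INR 1); lia).
  assert (Hz : (0 <= z)%Z).
  { assert (Hz : (-1 < z)%Z) by (apply lt_IZR; simpl; nra). lia. }
  assert (Hzn : INR (Z.to_nat z) = IZR z) by (rewrite INR_IZR_INZ, Z2Nat.id; auto).
  unfold bucket; fold z.
  destruct (Nat.le_ge_cases (Z.to_nat z) (m - 1)) as [Hle|Hge].
  - rewrite Nat.min_l by lia. split; [lia|]. rewrite Hzn. lra.
  - rewrite Nat.min_r by lia. split; [lia|].
    apply le_INR in Hge. rewrite minus_INR in * by lia. simpl INR in *. nra.
Qed.

Lemma exists_close_pair (n : nat) (X : nat -> R) : (2 <= n)%nat ->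
  (forall k, (k < n)%nat -> 0 <= X k <= 1) ->
  exists a b, (a < b < n)%nat /\ Rabs (X a - X b) * (INR n - 1) <= 1.
Proof.
  intros Hn HX.
  destruct (pigeonhole_nat (n - 1) (fun i => bucket (n - 1) (X i))) as [a [b [Hab Hbucket]]].
  { intros i Hi. apply bucket_spec; [lia | apply HX; lia]. }
  exists a, b. split; [lia|].
  destruct (bucket_spec (n - 1) (X a) ltac:(lia) (HX a ltac:(lia))) as [_ Ha].
  destruct (bucket_spec (n - 1) (X b) ltac:(lia) (HX b ltac:(lia))) as [_ Hb].
  rewrite Hbucket, minus_INR in Ha by lia. rewrite minus_INR in Hb by lia. simpl INR in Ha, Hb.
  assert (Hn1 : 0 <= INR n - 1) by (assert (1 <= INR n) by (apply (le_INR 1); lia); lra).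
  rewrite <- (Rabs_pos_eq (INR n - 1)) by assumption. rewrite <- Rabs_mult.
  apply Rabs_le. lra.
Qed.
Lemma fold_right_Rmin_le (l : list R) (v x : R) : In x (v :: l) -> fold_right Rmin v l <= x.
Proof.
  revert v x; induction l as [|a l IH]; intros v x Hx; simpl in *.
  - destruct Hx as [<-|[]]. lra.
  - destruct Hx as [<-|[<-|Hx]].
    + eapply Rle_trans; [apply Rmin_r | apply IH; left; reflexivity].
    + apply Rmin_l.
    + eapply Rle_trans; [apply Rmin_r | apply IH; right; assumption].
Qed.

Lemma fold_right_Rmin_glb (l : list R) (v c : R) :
  (forall x, In x (v :: l) -> c <= x) -> c <= fold_right Rmin v l.
Proof.
  revert v; induction l as [|a l IH]; intros v H; simpl.
  - apply H. left; reflexivity.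
  - apply Rmin_glb; [apply H; simpl; auto|].
    apply IH. intros y [<-|Hy]; apply H; simpl; auto.
Qed.

Lemma fold_right_Rmax_lub (l : list R) (c : R) : 0 <= c ->
  (forall x, In x l -> x <= c) -> fold_right Rmax 0 l <= c.
Proof.
  induction l as [|a l IH]; intros Hc H; simpl; [assumption|].
  apply Rmax_lub; [apply H; left; reflexivity|].
  apply IH; [assumption|]. intros; apply H; right; assumption.
Qed.

Lemma fold_right_Rmax_ge (l : list R) (x : R) : In x l -> x <= fold_right Rmax 0 l.
Proof.
  induction l as [|a l IH]; intros H; simpl in *; [destruct H|].
  destruct H as [<-|H]; [apply Rmax_l|].
  eapply Rle_trans; [apply IH; assumption | apply Rmax_r].
Qed.

Lemma RInt_two_steps (f : R -> R) (a b c v w : R) : a <= b <= c ->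
  (forall t, a < t < b -> f t = v) -> (forall t, b < t < c -> f t = w) ->
  RInt f a c = (b - a) * v + (c - b) * w.
Proof.
  intros Habc Hv Hw.
  assert (Ev : forall t, Rmin a b < t < Rmax a b -> f t = v).
  { intros t Ht. rewrite Rmin_left, Rmax_right in Ht by lra. auto. }
  assert (Ew : forall t, Rmin b c < t < Rmax b c -> f t = w).
  { intros t Ht. rewrite Rmin_left, Rmax_right in Ht by lra. auto. }
  assert (Iv : ex_RInt f a b).
  { apply (ex_RInt_ext (fun _ => v)); [intros; symmetry; auto | apply ex_RInt_const]. }
  assert (Iw : ex_RInt f b c).
  { apply (ex_RInt_ext (fun _ => w)); [intros; symmetry; auto | apply ex_RInt_const]. }
  rewrite <- (RInt_Chasles f a b c Iv Iw), (RInt_ext f _ a b Ev), (RInt_ext f _ b c Ew),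
    !RInt_const.
  reflexivity.
Qed.

Lemma In_dvals (S : instance) (X : nat -> R) (t v : R) : In v (dvals S X t) ->
  exists i, (i < length S)%nat /\ presentb S t i = true /\
   (v = dis_bd (X i) \/ exists j, (j < length S)%nat /\ presentb S t j = true /\ i <> j /\
      v = Rabs (X i - X j)).
Proof.
  unfold dvals. rewrite in_flat_map. intros [i [Hi Hv]].
  apply in_seq in Hi. exists i. split; [lia|].
  destruct (presentb S t i) eqn:Hp; [|destruct Hv].
  split; [reflexivity|]. destruct Hv as [<-|Hv]; [left; reflexivity|right].
  rewrite in_flat_map in Hv. destruct Hv as [j [Hj Hv]]. apply in_seq in Hj.
  exists j. split; [lia|].
  destruct (presentb S t j) eqn:Hq; simpl in Hv; [|destruct Hv].
  destruct (Nat.eqb_spec i j); simpl in Hv; [destruct Hv|].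
  destruct Hv as [<-|[]]. auto.
Qed.

Lemma dmin_nonneg (S : instance) (X : nat -> R) (t : R) : 0 <= dmin S X t.
Proof.
  unfold dmin. destruct (dvals S X t) as [|v l] eqn:E; [lra|].
  apply fold_right_Rmin_glb. intros x Hx. rewrite <- E in Hx.
  destruct (In_dvals _ _ _ _ Hx) as [i [_ [_ [->|[j [_ [_ [_ ->]]]]]]]].
  - apply Rmin_glb; apply Rabs_pos.
  - apply Rabs_pos.
Qed.

Lemma dmin_le_dist (S : instance) (X : nat -> R) (t : R) (a b : nat) :
  (a < length S)%nat -> (b < length S)%nat -> a <> b ->
  presentb S t a = true -> presentb S t b = true -> dmin S X t <= Rabs (X a - X b).
Proof.
  intros Ha Hb Hab Pa Pb.
  assert (Hin : In (Rabs (X a - X b)) (dvals S X t)).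
  { unfold dvals. rewrite in_flat_map. exists a. split; [apply in_seq; lia|].
    rewrite Pa. right. rewrite in_flat_map. exists b. split; [apply in_seq; lia|].
    rewrite Pb. destruct (Nat.eqb_spec a b); [contradiction|]. left; reflexivity. }
  unfold dmin. destruct (dvals S X t) as [|v l]; [destruct Hin|].
  apply fold_right_Rmin_le; assumption.
Qed.

Lemma dmin_ge (S : instance) (X : nat -> R) (t c : R) (k : nat) :
  (k < length S)%nat -> presentb S t k = true ->
  (forall i, (i < length S)%nat -> presentb S t i = true -> c <= dis_bd (X i)) ->
  (forall i j, (i < length S)%nat -> (j < length S)%nat -> i <> j ->
     presentb S t i = true -> presentb S t j = true -> c <= Rabs (X i - X j)) ->
  c <= dmin S X t.
Proof.
  intros Hk Pk Hbd Hdist.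
  assert (Hin : In (dis_bd (X k)) (dvals S X t)).
  { unfold dvals. apply in_flat_map. exists k. split; [apply in_seq; lia|].
    rewrite Pk. left; reflexivity. }
  unfold dmin. destruct (dvals S X t) as [|v l] eqn:E; [destruct Hin|].
  apply fold_right_Rmin_glb. intros x Hx. rewrite <- E in Hx.
  destruct (In_dvals _ _ _ _ Hx) as [i [Hi [Pi [->|[j [Hj [Pj [Hij ->]]]]]]]]; auto.
Qed.

Lemma dmin_ext (S : instance) (X : nat -> R) (t t' : R) :
  (forall k, presentb S t k = presentb S t' k) -> dmin S X t = dmin S X t'.
Proof.
  intro H. assert (E : dvals S X t = dvals S X t').
  { unfold dvals. apply flat_map_ext. intro i. rewrite H.
    destruct (presentb S t' i); [|reflexivity].
    f_equal. apply flat_map_ext. intro j. rewrite H. reflexivity. }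
  unfold dmin. rewrite E. reflexivity.
Qed.

Definition late_pair (n a b : nat) : instance :=
  map (fun k => (0, if orb (k =? a)%nat (k =? b)%nat then 2 else 1)) (seq 0 n).

Section LatePair.

Variables n a b : nat.

Lemma length_late_pair : length (late_pair n a b) = n.
Proof. unfold late_pair. rewrite length_map, length_seq. reflexivity. Qed.

Lemma nth_late_pair (k : nat) : nth k (late_pair n a b) (0, 0) =
  if (k <? n)%nat then (0, if orb (k =? a)%nat (k =? b)%nat then 2 else 1) else (0, 0).
Proof.
  destruct (Nat.ltb_spec k n) as [Hk|Hk].
  - unfold late_pair.
    set (f := fun k => (0, if orb (k =? a)%nat (k =? b)%nat then 2 else 1)).
    rewrite (nth_indep _ _ (f 0%nat)) by (rewrite length_map, length_seq; assumption).
    rewrite map_nth, seq_nth by assumption. reflexivity.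
  - apply nth_overflow. rewrite length_late_pair. assumption.
Qed.

Lemma arr_late_pair (k : nat) : arr (late_pair n a b) k = 0.
Proof. unfold arr. rewrite nth_late_pair. destruct (k <? n)%nat; reflexivity. Qed.

Lemma dep_late_pair (k : nat) : dep (late_pair n a b) k =
  if (k <? n)%nat then (if orb (k =? a)%nat (k =? b)%nat then 2 else 1) else 0.
Proof. unfold dep. rewrite nth_late_pair. destruct (k <? n)%nat; reflexivity. Qed.

Lemma late_pair_valid : valid_instance (late_pair n a b).
Proof.
  split; [|split].
  - intros i Hi. rewrite length_late_pair in Hi. rewrite arr_late_pair, dep_late_pair.
    apply Nat.ltb_lt in Hi as ->. destruct (orb _ _); lra.
  - intros _. apply arr_late_pair.
  - intros i j _ _. rewrite !arr_late_pair. lra.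
Qed.

Lemma presentb_late_pair_early (t : R) (k : nat) : 0 < t <= 1 ->
  presentb (late_pair n a b) t k = (k <? n)%nat.
Proof.
  intro Ht. unfold presentb. rewrite arr_late_pair, dep_late_pair.
  destruct (k <? n)%nat; [destruct (orb _ _)|]; repeat destruct Rle_dec; auto; lra.
Qed.

Lemma presentb_late_pair_late (t : R) (k : nat) : 1 < t <= 2 ->
  presentb (late_pair n a b) t k = andb (k <? n)%nat (orb (k =? a)%nat (k =? b)%nat).
Proof.
  intro Ht. unfold presentb. rewrite arr_late_pair, dep_late_pair.
  destruct (k <? n)%nat; [destruct (orb _ _)|]; repeat destruct Rle_dec; auto; lra.
Qed.

Lemma view_late_pair (i : nat) : (i < n)%nat ->
  view (late_pair n a b) i = map (fun _ => (0, None)) (seq 0 (S i)).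
Proof.
  intro Hi. unfold view. apply map_ext_in. intros j Hj. apply in_seq in Hj.
  rewrite !arr_late_pair, dep_late_pair.
  assert (Hj' : (j <? n)%nat = true) by (apply Nat.ltb_lt; lia). rewrite Hj'.
  destruct (j <? i)%nat; [|reflexivity].
  destruct (orb _ _); destruct Rle_dec; [lra | reflexivity | lra | reflexivity].
Qed.

Hypothesis a_lt_n : (a < n)%nat.

Lemma horizon_late_pair : horizon (late_pair n a b) = 2.
Proof.
  unfold horizon, late_pair. rewrite map_map. simpl. apply Rle_antisym.
  - apply fold_right_Rmax_lub; [lra|]. intros x Hx. apply in_map_iff in Hx as [k [<- _]].
    destruct (orb _ _); lra.
  - apply fold_right_Rmax_ge. apply in_map_iff. exists a.
    rewrite Nat.eqb_refl. split; [reflexivity | apply in_seq; lia].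
Qed.

Lemma cumdist_late_pair (X : nat -> R) :
  cumdist (late_pair n a b) X = dmin (late_pair n a b) X (1/2) + dmin (late_pair n a b) X (3/2).
Proof.
  unfold cumdist. rewrite horizon_late_pair.
  rewrite (RInt_two_steps _ 0 1 2 (dmin (late_pair n a b) X (1/2)) (dmin (late_pair n a b) X (3/2)));
    [ring | lra | |]; intros t Ht; apply dmin_ext; intro k.
  - rewrite !presentb_late_pair_early by lra. reflexivity.
  - rewrite !presentb_late_pair_late by lra. reflexivity.
Qed.

Hypotheses (b_lt_n : (b < n)%nat) (a_neq_b : a <> b).

Lemma cumdist_late_pair_le (X : nat -> R) :
  cumdist (late_pair n a b) X <= 2 * Rabs (X a - X b).
Proof.
  assert (Present : forall t k, 0 < t <= 2 -> (k = a \/ k = b) -> presentb (late_pair n a b) t k = true).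
  { intros t k Ht Hk. assert (Hkn : (k <? n)%nat = true) by (apply Nat.ltb_lt; lia).
    destruct (Rle_lt_dec t 1).
    - rewrite presentb_late_pair_early by lra. assumption.
    - rewrite presentb_late_pair_late, Hkn by lra.
      destruct Hk as [-> | ->]; rewrite Nat.eqb_refl; [|rewrite Bool.orb_true_r]; reflexivity. }
  rewrite cumdist_late_pair.
  assert (Hlen : length (late_pair n a b) = n) by apply length_late_pair.
  pose proof (dmin_le_dist (late_pair n a b) X (1/2) a b ltac:(lia) ltac:(lia) a_neq_b
    (Present (1/2) a ltac:(lra) (or_introl eq_refl)) (Present (1/2) b ltac:(lra) (or_intror eq_refl))).
  pose proof (dmin_le_dist (late_pair n a b) X (3/2) a b ltac:(lia) ltac:(lia) a_neq_b
    (Present (3/2) a ltac:(lra) (or_introl eq_refl)) (Present (3/2) b ltac:(lra) (or_intror eq_refl))).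
  lra.
Qed.

(* Offline, [a] and [b] sit at 1/3 and 2/3: once the others have left they
   are 1/3 apart from each other and from the boundary. *)
Lemma OPT_C_late_pair_ge : Rbar_le (Finite (1/3)) (OPT_C (late_pair n a b)).
Proof.
  set (Xo := fun k => if (k =? a)%nat then 1/3 else if (k =? b)%nat then 2/3 else 0).
  assert (HXo : forall k, presentb (late_pair n a b) (3/2) k = true ->
                  Xo k = 1/3 /\ k = a \/ Xo k = 2/3 /\ k = b).
  { intros k Hk. rewrite presentb_late_pair_late in Hk by lra.
    apply andb_prop in Hk as [_ Hk]. unfold Xo.
    destruct (Nat.eqb_spec k a); [left; auto|].
    destruct (Nat.eqb_spec k b); [right; auto | discriminate]. }
  assert (Hopt : 1/3 <= cumdist (late_pair n a b) Xo).
  { rewrite cumdist_late_pair.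
    pose proof (dmin_nonneg (late_pair n a b) Xo (1/2)).
    enough (1/3 <= dmin (late_pair n a b) Xo (3/2)) by lra.
    apply (dmin_ge _ _ _ _ a).
    - rewrite length_late_pair. assumption.
    - rewrite presentb_late_pair_late, Nat.eqb_refl by lra.
      apply Nat.ltb_lt in a_lt_n as ->. reflexivity.
    - intros i _ Pi. unfold dis_bd.
      destruct (HXo i Pi) as [[-> _]|[-> _]]; apply Rmin_glb; unfold Rabs;
        destruct Rcase_abs; lra.
    - intros i j _ _ Hij Pi Pj.
      destruct (HXo i Pi) as [[-> ?]|[-> ?]]; destruct (HXo j Pj) as [[-> ?]|[-> ?]];
        try lia; unfold Rabs; destruct Rcase_abs; lra. }
  apply Rbar_le_trans with (Finite (cumdist (late_pair n a b) Xo)); [exact Hopt|].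
  apply (proj1 (Lub_Rbar_correct _)). exists Xo. split; [|reflexivity].
  intros k _. unfold Xo. destruct (k =? a)%nat; [|destruct (k =? b)%nat]; lra.
Qed.

End LatePair.

Lemma nth_locs (alg : instance -> nat -> R) (S : instance) (m k : nat) :
  (k < m)%nat -> nth k (locs alg S m) 0 = alg S k.
Proof.
  intro Hk. unfold locs.
  rewrite (nth_indep _ _ (alg S 0%nat)) by (rewrite length_map, length_seq; assumption).
  rewrite map_nth, seq_nth by assumption. reflexivity.
Qed.

Section OnlineOnLatePairs.

Variables (alg : instance -> nat -> R) (n : nat).
Hypothesis alg_online : online_alg alg.

Lemma online_alg_late_pair (a b a' b' k : nat) : (k < n)%nat ->
  alg (late_pair n a b) k = alg (late_pair n a' b') k.
Proof.
  intro Hk. apply alg_online; try apply late_pair_valid; rewrite ?length_late_pair; auto.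
  rewrite !view_late_pair by assumption. reflexivity.
Qed.

Lemma locs_late_pair (a b a' b' m : nat) : (m <= n)%nat ->
  locs alg (late_pair n a b) m = locs alg (late_pair n a' b') m.
Proof.
  intro Hm. apply map_ext_in. intros k Hk. apply in_seq in Hk.
  apply online_alg_late_pair. lia.
Qed.

End OnlineOnLatePairs.

Definition close_pair (n : nat) (X : nat -> R) : nat * nat :=
  epsilon (inhabits (0%nat, 0%nat))
    (fun q => (fst q < snd q < n)%nat /\ Rabs (X (fst q) - X (snd q)) * (INR n - 1) <= 1).

Lemma close_pair_spec (n : nat) (X : nat -> R) : (2 <= n)%nat ->
  (forall k, (k < n)%nat -> 0 <= X k <= 1) ->
  (fst (close_pair n X) < snd (close_pair n X) < n)%nat /\
  Rabs (X (fst (close_pair n X)) - X (snd (close_pair n X))) * (INR n - 1) <= 1.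
Proof.
  intros Hn HX. unfold close_pair. apply epsilon_spec.
  destruct (exists_close_pair n X Hn HX) as [a [b H]]. exists (a, b). exact H.
Qed.

Definition adversary (n : nat) (L : list R) : instance :=
  let q := close_pair n (fun k => nth k L 0) in late_pair n (fst q) (snd q).

Lemma adversary_generated (n : nat) (alg : instance -> nat -> R) : online_alg alg ->
  generated (adversary n) alg (adversary n (locs alg (late_pair n 0 0) n)).
Proof.
  intro Halg. unfold adversary at 2.
  set (q := close_pair _ _).
  split; [apply late_pair_valid|]. rewrite length_late_pair. split.
  - rewrite (locs_late_pair alg n Halg (fst q) (snd q) 0 0) by lia. reflexivity.
  - intros i Hi. unfold adversary. rewrite length_late_pair.
    split; [assumption|]. rewrite !view_late_pair by assumption. reflexivity.
Qed.

Theorem claim1 :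
  exists c : R, 0 < c /\ exists N : nat,
  forall n : nat, (N <= n)%nat ->
  forall (Omega : Type) (A : Omega -> instance -> nat -> R),
    (forall w, online_alg (A w)) ->
    exists adv : list R -> instance,
      forall w, exists S : instance,
        length S = n /\ generated adv (A w) S /\
        Rbar_le (Finite (c * INR n * cumdist S (A w S))) (OPT_C S).
Proof.
  exists (1/12). split; [lra|]. exists 2%nat. intros n Hn Omega A HA.
  exists (adversary n). intro w.
  set (L := locs (A w) (late_pair n 0 0) n).
  exists (adversary n L). split; [apply length_late_pair|].
  split; [apply adversary_generated, HA|].
  assert (HL : forall k, (k < n)%nat -> nth k L 0 = A w (adversary n L) k).
  { intros k Hk. unfold L. rewrite nth_locs by assumption.
    apply (online_alg_late_pair _ n (HA w)). assumption. }
  destruct (close_pair_spec n (fun k => nth k L 0) Hn) as [Hab Hclose].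
  { intros k Hk. unfold L. rewrite nth_locs by assumption.
    apply (HA w); [apply late_pair_valid | rewrite length_late_pair; assumption]. }
  unfold adversary in HL |- *. set (q := close_pair _ _) in *.
  rewrite !HL in Hclose by lia.
  set (d := Rabs _) in Hclose.
  pose proof (cumdist_late_pair_le n (fst q) (snd q) ltac:(lia) ltac:(lia) ltac:(lia)
    (A w (late_pair n (fst q) (snd q)))) as Halg.
  fold d in Halg.
  apply Rbar_le_trans with (Finite (1/3)); [|apply OPT_C_late_pair_ge; lia].
  simpl. assert (Hn2 : 2 <= INR n) by (apply (le_INR 2); assumption).
  assert (0 <= d) by apply Rabs_pos.
  assert (Hnd : INR n * d <= 2) by nra.
  apply Rle_trans with (1/12 * INR n * (2 * d)); [apply Rmult_le_compat_l; [lra | exact Halg] | lra].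
Qed.
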